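(* Let $1\le n\le L$. If $q_i=0$ for all $i=1,\dots,n$, then $$Z_{L,n}=(p_1\cdots p_n)^{L-n}\,h_{L-n}\!\left(\frac{1}{p_1},\dots,\frac{1}{p_n}\right),$$ where $h_m(x_1,\dots,x_n)=\sum_{1\le i_1\le\cdots\le i_m\le n}x_{i_1}\cdots x_{i_m}$ is the complete homogeneous symmetric polynomial of degree $m$.
   Context: Particle labels are taken modulo $n$. $\Omega_{L,n}$ is the set of words $w_1\cdots w_L$ on the ring $\mathbb{Z}/L\mathbb{Z}$ over the alphabet $\{\bullet_1,\dots,\bullet_n,\Box_1,\dots,\Box_n\}$ in which each $\bullet_k$ occurs exactly once, the $\bullet_1,\dots,\bullet_n$ appear in this cyclic order, and the remaining $L-n$ letters are arbitrary $\Box_i$'s. For $w\in\Omega_{L,n}$ let $b_k$ be the position of $\bullet_k$ and $C_k$ the set of positions strictly between $b_k$ and $b_{k+1}$ going cyclically forward ($b_{n+1}=b_1$). For $i,k\in\{1,\dots,n\}$ set $w_\Box(i,k)=p_1\cdots p_{i-1}q_{i+1}\cdots q_kp_{k+1}\cdots p_n$ if $i\le k$ and $w_\Box(i,k)=q_1\cdots q_kp_{k+1}\cdots p_{i-1}q_{i+1}\cdots q_n$ if $k<i$ (empty products are $1$). The weight is $\mathrm{wt}(w)=\prod_{k=1}^n\prod_{j\in C_k}w_\Box(i_j,k)$ where $w_j=\Box_{i_j}$. The restricted partition function is the polynomial $Z_{L,n}=\sum\mathrm{wt}(w)$, summed over $w\in\Omega_{L,n}$ with $w_1=\bullet_1$;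 the claim concerns its specialization at $q_1=\cdots=q_n=0$. *)

(* Positions 1..L of the paper are 'I_L (paper position j+1 = j),
   particle labels 1..n are 'I_n (paper label k+1 = k). *)
From mathcomp Require Import all_boot all_order all_algebra.
Set Implicit Arguments. Unset Strict Implicit. Unset Printing Implicit Defensive.
Import Order.TTheory GRing.Theory Num.Theory.
Local Open Scope ring_scope.

(* A letter: (true, k) = bullet_k, (false, i) = box_i. *)
Definition letter (n : nat) := (bool * 'I_n)%type.
Definition word (L n : nat) := {ffun 'I_L -> letter n}.

Section Defs.
Variables (L n : nat).

(* position (as a nat in [0, L)) of bullet_k; meaningful when it occurs once *)
Definition bpos (w : word L n) (k : 'I_n) : nat :=
  odflt 0%N (omap (@nat_of_ord L) [pick j | w j == (true, k)]).

Definition bullets_once (w : word L n) : bool :=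
  [forall k : 'I_n, #|[set j : 'I_L | w j == (true, k)]| == 1%N].

(* bullets appear in cyclic order bullet_1, ..., bullet_n: their cyclic
   offsets from bullet_1 are strictly increasing *)
Definition b1pos (w : word L n) : nat :=
  odflt 0%N (omap (bpos w) [pick k0 : 'I_n | val k0 == 0%N]).

Definition cyc_off (w : word L n) (k : 'I_n) : nat :=
  ((bpos w k + L - b1pos w) %% L)%N.

Definition cyclic_order (w : word L n) : bool :=
  [forall k : 'I_n, forall k' : 'I_n, (k < k')%N ==> (cyc_off w k < cyc_off w k')%N].

Definition Omega (w : word L n) : bool := bullets_once w && cyclic_order w.

Definition starts_bullet1 (w : word L n) : bool :=
  [forall j : 'I_L, (val j == 0%N) ==> ((w j).1 && (val (w j).2 == 0%N))].

Definition nextb (w : word L n) (k : 'I_n) : nat :=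
  odflt 0%N (omap (bpos w) [pick k' : 'I_n | val k' == ((k.+1) %% n)%N]).

(* cyclic forward distance from b_k to b_{k+1}; equals L when b_{k+1} = b_k (n = 1) *)
Definition gap (w : word L n) (k : 'I_n) : nat :=
  (((nextb w k + L - bpos w k).-1 %% L).+1)%N.

(* C_k : positions strictly between b_k and b_{k+1} going cyclically forward *)
Definition Cset (w : word L n) (k : 'I_n) : {set 'I_L} :=
  [set j : 'I_L | (0 < (j + L - bpos w k) %% L < gap w k)%N].

Variable R : comRingType.
Variables p q : 'I_n -> R.

Definition wbox (i k : 'I_n) : R :=
  \prod_(j < n | j != i)
     (if (i <= k)%N then (if (i < j)%N && (j <= k)%N then q j else p j)
      else (if (j <= k)%N || (i < j)%N then q j else p j)).

Definition wt (w : word L n) : R :=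
  \prod_(k < n) \prod_(j in Cset w k) wbox (w j).2 k.

Definition Zpart : R :=
  \sum_(w : word L n | Omega w && starts_bullet1 w) wt w.

End Defs.

Definition hcompl (R : comRingType) (n m : nat) (x : 'I_n -> R) : R :=
  \sum_(s : m.-tuple 'I_n | sorted leq (map (@nat_of_ord n) s)) \prod_(i <- s) x i.

From mathcomp Require Import all_boot all_order all_algebra.
From mathcomp Require Import zify.
Import GRing.Theory.
Set Implicit Arguments. Unset Strict Implicit. Unset Printing Implicit Defensive.

(* With q = 0 the factor w_Box(i,k) vanishes unless i = k, and w_Box(k,k) is
   p_1...p_n / p_k.  So the only words that contribute are those whose gaps C_k
   consist of boxes Box_k; with w_1 = bullet_1 such a word is determined by its
   gap lengths c_k, which sum to L - n, and it weighs prod_k (p_1...p_n / p_k)^c_k.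
   Recording the gap lengths as the weakly increasing (L - n)-tuple with c_k
   entries equal to k matches these words with the monomials of h_(L-n), and the
   weight with (p_1...p_n)^(L-n) times the monomial evaluated at 1/p. *)

Section WordOfBullets.
Variables L n : nat.
Implicit Types (B : nat -> nat) (j k : nat).

Definition bullets_increasing B := forall k k', k < k' -> k' <= n -> B k < B k'.

(* Particles are labelled 0..n.  Bullet k sits at position B k (bullet 0 at
   position 0, so it is not counted by last_bullet) and every other position
   holds a box labelled by the last bullet to its left. *)
Definition last_bullet B j := count (fun k => B k <= j) (iota 1 n).

Definition word_of_bullets B : word L n.+1 :=
  [ffun j : 'I_L => (j == B (last_bullet B j) :> nat, inord (last_bullet B j))].

Definition next_bullet B k := if k < n then B k.+1 else L.

Lemma bullets_increasing_leq B k k' :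
  bullets_increasing B -> k <= k' -> k' <= n -> B k <= B k'.
Proof.
move=> B_incr; rewrite leq_eqVlt => /orP[/eqP -> // | lt_kk'] le_k'n.
exact/ltnW/B_incr.
Qed.

Lemma count_iota_leq k : k <= n -> count (fun x => x <= k) (iota 1 n) = k.
Proof.
move=> le_kn; rewrite -size_filter -[k in RHS](size_iota 1) -(filter_iota_ltn 1 le_kn).
by congr size; apply: eq_filter.
Qed.

Lemma last_bullet_le B j : last_bullet B j <= n.
Proof. by rewrite -[n in _ <= n](size_iota 1) count_size. Qed.

Lemma last_bulletE B j k : bullets_increasing B -> k <= n ->
  B k <= j -> (k < n -> j < B k.+1) -> last_bullet B j = k.
Proof.
move=> B_incr le_kn le_Bk_j lt_j_next; rewrite /last_bullet -(count_iota_leq le_kn).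
apply: eq_in_count => x; rewrite mem_iota add1n ltnS => /andP[_ le_xn].
have [le_xk | lt_kx] := leqP x k.
  by apply/idP; apply: leq_trans le_Bk_j; apply: bullets_increasing_leq.
apply/negbTE; rewrite -ltnNge.
have lt_kn : k < n by apply: leq_trans lt_kx le_xn.
by apply: leq_trans (lt_j_next lt_kn) _; apply: bullets_increasing_leq.
Qed.

Lemma last_bullet_at B k : bullets_increasing B -> k <= n -> last_bullet B (B k) = k.
Proof. by move=> B_incr le_kn; apply: last_bulletE => // lt_kn; apply: B_incr. Qed.

Lemma last_bulletP B j : bullets_increasing B -> B 0 = 0 ->
  B (last_bullet B j) <= j /\ (last_bullet B j < n -> j < B (last_bullet B j).+1).
Proof.
move=> B_incr B0.
have [k [le_kn le_Bk_j lt_j_next]] :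
    exists k, [/\ k <= n, B k <= j & (k < n -> j < B k.+1)].
  suff /(_ n (leqnn n)) : forall t, t <= n ->
      exists k, [/\ k <= t, B k <= j & (k < t -> j < B k.+1)] by [].
  elim=> [|t IHt] lt_tn; first by exists 0; rewrite B0.
  have [le_Bt1_j | lt_j_Bt1] := leqP (B t.+1) j.
    by exists t.+1; rewrite ltnn.
  have [k [le_kt le_Bk_j lt_j_next]] := IHt (ltnW lt_tn).
  exists k; split=> //; first exact: leqW.
  by move: le_kt; rewrite leq_eqVlt => /orP[/eqP -> // | /lt_j_next].
by rewrite (last_bulletE B_incr le_kn le_Bk_j lt_j_next).
Qed.

Lemma word_of_bullets_bullet B (j : 'I_L) (k : 'I_n.+1) : bullets_increasing B ->
  (word_of_bullets B j == (true, k)) = (j == B k :> nat).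
Proof.
move=> B_incr; rewrite ffunE; apply/eqP/eqP => [[/eqP j_eq <-] | j_eq].
  by rewrite inordK ?ltnS ?last_bullet_le.
by rewrite j_eq last_bullet_at ?eqxx ?inord_val // -ltnS.
Qed.

Lemma eq_word_of_bullets B1 B2 :
  (forall k, k <= n -> B1 k = B2 k) -> word_of_bullets B1 = word_of_bullets B2.
Proof.
move=> eqB; have eq_last j : last_bullet B1 j = last_bullet B2 j.
  by apply: eq_in_count => x; rewrite mem_iota add1n ltnS => /andP[_ /eqB ->].
by apply/ffunP => j; rewrite !ffunE eq_last eqB // last_bullet_le.
Qed.

End WordOfBullets.

Section BulletsOfWord.
Variables L n : nat.
Variable w : word L n.+1.
Hypothesis w_once : bullets_once w.

Lemma bpos_bullet (j : 'I_L) (k : 'I_n.+1) : w j = (true, k) -> nat_of_ord j = bpos w k.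
Proof.
move/forallP/(_ k)/cards1P: w_once => [j0 bullet_k] /eqP.
have bulletE x : (w x == (true, k)) = (x == j0) by rewrite -in_set1 -bullet_k inE.
rewrite bulletE => /eqP ->; rewrite /bpos.
by case: pickP => [j' | /(_ j0)]; rewrite bulletE ?eqxx // => /eqP ->.
Qed.

Lemma bullet_occurs (k : 'I_n.+1) : exists j, w j = (true, k).
Proof.
move/forallP/(_ k)/cards1P: w_once => [j bullet_k].
have /[!inE] /eqP wj : j \in [set j | w j == (true, k)] by rewrite bullet_k set11.
by exists j.
Qed.

Lemma bpos_lt k : bpos w k < L.
Proof. by have [j /bpos_bullet <-] := bullet_occurs k. Qed.

Lemma word_len_gt0 : 0 < L.
Proof. exact: leq_ltn_trans (bpos_lt ord0). Qed.

Hypothesis w_start : starts_bullet1 w.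

Lemma bpos_ord0 : bpos w ord0 = 0.
Proof.
have /= := forallP w_start (Ordinal word_len_gt0).
case w0: (w _) => [[] k] //= /eqP k0.
by rewrite (_ : ord0 = k) -?(bpos_bullet w0) //; apply: val_inj.
Qed.

Lemma b1pos_eq0 : b1pos w = 0.
Proof.
rewrite /b1pos; case: pickP => [k /eqP k0 | /(_ ord0) //] /=.
by rewrite -bpos_ord0; congr bpos; apply: val_inj.
Qed.

Lemma cyc_off_bpos k : cyc_off w k = bpos w k.
Proof. by rewrite /cyc_off b1pos_eq0 subn0 modnDr modn_small ?bpos_lt. Qed.

Definition bullet_pos k := bpos w (inord k).

Lemma bullet_pos_ord (k : 'I_n.+1) : bullet_pos k = bpos w k.
Proof. by rewrite /bullet_pos inord_val. Qed.

Lemma bullet_pos0 : bullet_pos 0 = 0.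
Proof. exact: etrans (bullet_pos_ord ord0) bpos_ord0. Qed.

Lemma bullet_pos_lt k : bullet_pos k < L.
Proof. exact: bpos_lt. Qed.

Hypothesis w_cyclic : cyclic_order w.

Lemma bullet_pos_increasing : bullets_increasing n bullet_pos.
Proof.
move=> k k' lt_kk' le_k'n; have lt_kn : k < n.+1 := leq_trans lt_kk' (leqW le_k'n).
have /implyP := forallP (forallP w_cyclic (inord k)) (inord k').
by rewrite !cyc_off_bpos !inordK //; apply.
Qed.

Local Notation next := (next_bullet L n bullet_pos).

Lemma nextbE (k : 'I_n.+1) : nextb w k = if k < n then bullet_pos k.+1 else 0.
Proof.
rewrite /nextb; case: pickP => [k' /eqP k'E | /(_ (inord (k.+1 %% n.+1)))] /=.
  case: ifP => lt_kn; first by rewrite modn_small // in k'E; rewrite -k'E bullet_pos_ord.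
  have k_eq_n : nat_of_ord k = n by apply/eqP; rewrite eqn_leq -ltnS ltn_ord leqNgt lt_kn.
  by rewrite k_eq_n modnn in k'E; rewrite -bpos_ord0; congr bpos; apply: val_inj.
by rewrite inordK ?eqxx // ltn_pmod.
Qed.

Lemma next_bullet_le k : next k <= L.
Proof. by rewrite /next_bullet; case: ifP => // _; apply/ltnW/bullet_pos_lt. Qed.

Lemma bullet_pos_lt_next (k : 'I_n.+1) : bullet_pos k < next k.
Proof.
rewrite /next_bullet; case: ifP => [lt_kn | _]; last exact: bullet_pos_lt.
exact: bullet_pos_increasing.
Qed.

Lemma gapE (k : 'I_n.+1) : gap w k = next k - bullet_pos k.
Proof.
have := bullet_pos_lt_next k; have := next_bullet_le k.
rewrite /gap nextbE -bullet_pos_ord /next_bullet; case: ifP => _ le_next lt_next.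
  by rewrite (_ : _.-1 = (bullet_pos k.+1 - bullet_pos k).-1 + L) ?modnDr ?modn_small; lia.
by rewrite modn_small; lia.
Qed.

Lemma mem_Cset (k : 'I_n.+1) (j : 'I_L) :
  (j \in Cset w k) = (bullet_pos k < j < next k).
Proof.
have := bullet_pos_lt_next k; have := next_bullet_le k; have := ltn_ord j.
rewrite inE gapE -bullet_pos_ord => lt_jL le_next lt_next.
have [le_kj | lt_jk] := leqP (bullet_pos k) j.
  by rewrite (_ : j + L - _ = (j - bullet_pos k) + L) ?modnDr ?modn_small; lia.
by rewrite modn_small; lia.
Qed.

Lemma word_of_bullet_pos :
  (forall (k : 'I_n.+1) j, j \in Cset w k -> (w j).2 = k) ->
  w = word_of_bullets L n bullet_pos.
Proof.
move=> Cset_label; apply/ffunP => j; rewrite ffunE.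
have [le_Bk_j lt_j_next] := last_bulletP j bullet_pos_increasing bullet_pos0.
set k := last_bullet n bullet_pos j in le_Bk_j lt_j_next *.
have lt_kn : k < n.+1 by rewrite ltnS last_bullet_le.
have [j_eq | j_neq] := eqVneq (nat_of_ord j) (bullet_pos k).
  have [j' wj'] := bullet_occurs (inord k).
  by rewrite -wj' (_ : j = j') //; apply: val_inj; rewrite /= j_eq (bpos_bullet wj').
have j_in_C : j \in Cset w (inord k).
  rewrite mem_Cset inordK // ltn_neqAle eq_sym j_neq le_Bk_j /next_bullet.
  by case: ifP => [/lt_j_next -> | _]; rewrite ?ltn_ord.
case wj: (w j) (Cset_label _ _ j_in_C) => [[] l] /= l_eq; rewrite l_eq // in wj *.
by move: j_neq; rewrite (bpos_bullet wj) /bullet_pos eqxx.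
Qed.

End BulletsOfWord.

Lemma card_ord_between L a b : a < b -> b <= L ->
  #|[pred j : 'I_L | a < j < b]| = b - a.+1.
Proof.
move=> lt_ab le_bL; rewrite -sum1_card (eq_bigl (fun j : 'I_L => a < j < b)) //.
rewrite -(big_mkord (fun j => a < j < b) (fun _ => 1)) /index_iota subn0 sum1_count.
rewrite (_ : L = a.+1 + ((b - a.+1) + (L - b))); last by lia.
rewrite !iotaD !count_cat add0n.
rewrite (@eq_in_count _ _ pred0 (iota 0 a.+1)) ?count_pred0; last first.
  by move=> x; rewrite mem_iota => /andP[_ lt_xa]; apply/negbTE; lia.
rewrite (@eq_in_count _ _ predT (iota a.+1 _)) ?count_predT ?size_iota; last first.
  by move=> x; rewrite mem_iota /= => /andP[? ?]; lia.
rewrite (@eq_in_count _ _ pred0 (iota (a.+1 + _) _)) ?count_pred0 ?addn0 //.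
by move=> x; rewrite mem_iota => /andP[? _]; apply/negbTE; lia.
Qed.

Section BulletsWord.
Variables L n : nat.
Variable B : nat -> nat.
Hypotheses (B_incr : bullets_increasing n B) (B0 : B 0 = 0) (lt_BnL : B n < L).
Local Notation w := (word_of_bullets L n B).
Local Notation next := (next_bullet L n B).

Lemma bullet_lt k : k <= n -> B k < L.
Proof.
by move=> le_kn; apply: leq_ltn_trans (bullets_increasing_leq B_incr le_kn (leqnn n)) lt_BnL.
Qed.

Lemma word_of_bullets_once : bullets_once w.
Proof.
apply/forallP => k; apply/cards1P; exists (Ordinal (bullet_lt (ltn_ord k))).
by apply/setP => j; rewrite !inE word_of_bullets_bullet.
Qed.

Lemma bpos_word_of_bullets k : bpos w k = B k.
Proof.
have wk : w (Ordinal (bullet_lt (ltn_ord k))) = (true, k).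
  by apply/eqP; rewrite word_of_bullets_bullet.
by rewrite -(bpos_bullet word_of_bullets_once wk).
Qed.

Lemma word_of_bullets_start : starts_bullet1 w.
Proof.
have last0 : last_bullet n B 0 = 0 by rewrite -{1}B0 last_bullet_at.
by apply/forallP => j; apply/implyP => /eqP j0; rewrite ffunE j0 last0 B0 /= inordK.
Qed.

Lemma word_of_bullets_cyclic : cyclic_order w.
Proof.
apply/'forall_forallP => k k'; apply/implyP => lt_kk'.
rewrite !(cyc_off_bpos word_of_bullets_once word_of_bullets_start).
by rewrite !bpos_word_of_bullets B_incr // -ltnS.
Qed.

Lemma bullet_pos_word_of_bullets k : k <= n -> bullet_pos w k = B k.
Proof. by move=> le_kn; rewrite /bullet_pos bpos_word_of_bullets inordK. Qed.

Lemma mem_Cset_word_of_bullets (k : 'I_n.+1) (j : 'I_L) :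
  (j \in Cset w k) = (B k < j < next k).
Proof.
have le_kn : k <= n by rewrite -ltnS.
rewrite (mem_Cset word_of_bullets_once word_of_bullets_start word_of_bullets_cyclic).
rewrite bullet_pos_word_of_bullets // /next_bullet.
by case: ifP => // lt_kn; rewrite bullet_pos_word_of_bullets.
Qed.

Lemma label_Cset_word_of_bullets (k : 'I_n.+1) j : j \in Cset w k -> (w j).2 = k.
Proof.
rewrite mem_Cset_word_of_bullets => /andP[lt_Bk_j lt_j_next]; rewrite ffunE /=.
have le_kn : k <= n by rewrite -ltnS.
rewrite (last_bulletE B_incr le_kn (ltnW lt_Bk_j)) ?inord_val //.
by move=> lt_kn; move: lt_j_next; rewrite /next_bullet lt_kn.
Qed.

Lemma card_Cset_word_of_bullets (k : 'I_n.+1) : #|Cset w k| = next k - (B k).+1.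
Proof.
rewrite -(@card_ord_between L (B k) (next k)); last 2 first.
- rewrite /next_bullet; case: ifP => [lt_kn | _]; last exact: bullet_lt (ltn_ord k).
  exact: B_incr _ _ (ltnSn k) lt_kn.
- by rewrite /next_bullet; case: ifP => // lt_kn; apply/ltnW/bullet_lt.
by apply: eq_card => j; rewrite mem_Cset_word_of_bullets inE.
Qed.

End BulletsWord.

(* Bullet positions of the word whose boxes, read from left to right, carry the
   sorted labels s: bullet k comes after k bullets and the boxes labelled < k. *)
Definition bullets_of_seq (s : seq nat) k := k + count (fun x => x < k) s.

Lemma bullets_of_seq0 s : bullets_of_seq s 0 = 0.
Proof. by rewrite /bullets_of_seq; elim: s. Qed.

Lemma bullets_of_seq_increasing n s : bullets_increasing n (bullets_of_seq s).
Proof.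
move=> k k' lt_kk' _; rewrite /bullets_of_seq.
suff : count (fun x => x < k) s <= count (fun x => x < k') s by lia.
by apply: sub_count => x /= lt_xk; apply: ltn_trans lt_xk lt_kk'.
Qed.

Lemma count_ltnS (s : seq nat) k :
  count (fun x => x < k.+1) s = count (fun x => x < k) s + count_mem k s.
Proof. by elim: s => //= x s ->; rewrite ltnS leq_eqVlt; case: ltngtP; lia. Qed.

Lemma bullets_of_seq_lt L n s : size s = L - n.+1 -> n < L -> bullets_of_seq s n < L.
Proof. by have := count_size (fun x => x < n) s; rewrite /bullets_of_seq; lia. Qed.

Lemma next_bullets_of_seq L n s k :
  size s = L - n.+1 -> all (fun x => x < n.+1) s -> k <= n ->
  next_bullet L n (bullets_of_seq s) k - (bullets_of_seq s k).+1 = count_mem k s.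
Proof.
move=> size_s s_labels le_kn; rewrite /next_bullet /bullets_of_seq.
case: ifP => lt_kn; first by rewrite count_ltnS; lia.
have count_labels : count (fun x => x < n.+1) s = L - n.+1.
  by rewrite -size_s; apply/eqP; rewrite -all_count.
have k_eq_n : k = n by lia.
by rewrite k_eq_n count_ltnS in count_labels *; lia.
Qed.

Fixpoint blocks (c : nat -> nat) t : seq nat :=
  if t is t'.+1 then blocks c t' ++ nseq (c t') t' else [::].

Lemma blocks_lt c t : all (fun x => x < t) (blocks c t).
Proof.
elim: t => //= t IHt; rewrite all_cat all_nseq ltnSn orbT andbT.
by apply: sub_all IHt => x /ltnW.
Qed.

Lemma count_lt_blocks c t k : k <= t -> count (fun x => x < k) (blocks c t) = size (blocks c k).
Proof.
elim: t => [|t IHt]; first by rewrite leqn0 => /eqP ->.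
rewrite leq_eqVlt ltnS => /orP[/eqP -> | le_kt]; first by apply/eqP; rewrite -all_count blocks_lt.
by rewrite /= count_cat IHt // count_nseq /= ltnNge le_kt mul0n addn0.
Qed.

Lemma sorted_blocks c t : sorted leq (blocks c t).
Proof.
rewrite (sorted_pairwise leq_trans); elim: t => //= t IHt.
rewrite pairwise_cat IHt /=; apply/andP; split.
  apply/allrelP => x y /(allP (blocks_lt c t)) lt_xt.
  by rewrite mem_nseq => /andP[_ /eqP ->]; apply: ltnW.
by elim: (c t) => //= m ->; rewrite all_nseq leqnn orbT.
Qed.

Section BlocksOfGaps.
Variables L n : nat.
Variable B : nat -> nat.
Hypotheses (B_incr : bullets_increasing n B) (B0 : B 0 = 0) (lt_BnL : B n < L).
(* Listing each label as often as the gap after its bullet is long inverts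
   bullets_of_seq. *)
Let gaps k := next_bullet L n B k - (B k).+1.

Lemma leq_bullet k : k <= n -> k <= B k.
Proof.
elim: k => // k IHk lt_kn.
by have := B_incr (ltnSn k) lt_kn; have := IHk (ltnW lt_kn); lia.
Qed.

Lemma size_blocks_gaps_le t : t <= n -> size (blocks gaps t) = B t - t.
Proof.
elim: t => [|t IHt] lt_tn /=; first by rewrite B0.
rewrite size_cat size_nseq IHt ?(ltnW lt_tn) // /gaps /next_bullet lt_tn.
by have := B_incr (ltnSn t) lt_tn; have := leq_bullet (ltnW lt_tn); lia.
Qed.

Lemma size_blocks_gaps : size (blocks gaps n.+1) = L - n.+1.
Proof.
rewrite /= size_cat size_nseq size_blocks_gaps_le // /gaps /next_bullet ltnn.
by have := leq_bullet (leqnn n); lia.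
Qed.

Lemma bullets_of_blocks_gaps k : k <= n -> bullets_of_seq (blocks gaps n.+1) k = B k.
Proof.
move=> le_kn; rewrite /bullets_of_seq count_lt_blocks ?size_blocks_gaps_le //.
  by have := leq_bullet le_kn; lia.
exact: leqW.
Qed.

End BlocksOfGaps.

Section TupleWord.
Variables L n : nat.
Hypothesis lt_nL : n < L.
Implicit Type s : (L - n.+1).-tuple 'I_n.+1.

Definition tuple_word s : word L n.+1 :=
  word_of_bullets L n (bullets_of_seq (map val s)).

Let size_vals s : size (map val s) = L - n.+1.
Proof. by rewrite size_map size_tuple. Qed.

Let vals_lt s : all (fun x => x < n.+1) (map val s).
Proof. by apply/allP => _ /mapP[x _ ->]; apply: ltn_ord. Qed.

Lemma tuple_bullets_lt s : bullets_of_seq (map val s) n < L.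
Proof. exact: bullets_of_seq_lt (size_vals s) lt_nL. Qed.

Lemma tuple_word_valid s : Omega (tuple_word s) && starts_bullet1 (tuple_word s).
Proof.
have B_incr := @bullets_of_seq_increasing n (map val s).
by rewrite /Omega word_of_bullets_once ?word_of_bullets_cyclic ?word_of_bullets_start
  ?bullets_of_seq0 ?tuple_bullets_lt.
Qed.

Lemma label_Cset_tuple_word s (k : 'I_n.+1) j :
  j \in Cset (tuple_word s) k -> (tuple_word s j).2 = k.
Proof.
exact/label_Cset_word_of_bullets/tuple_bullets_lt/bullets_of_seq0/bullets_of_seq_increasing.
Qed.

Lemma card_Cset_tuple_word s (k : 'I_n.+1) : #|Cset (tuple_word s) k| = count_mem k s.
Proof.
have B_incr := @bullets_of_seq_increasing n (map val s).
rewrite card_Cset_word_of_bullets ?bullets_of_seq0 ?tuple_bullets_lt //.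
rewrite (next_bullets_of_seq (size_vals s) (vals_lt s)) ?leq_ord //.
by rewrite count_map; apply: eq_count => x; rewrite /= val_eqE.
Qed.

Lemma tuple_word_inj s1 s2 :
  sorted leq (map val s1) -> sorted leq (map val s2) ->
  tuple_word s1 = tuple_word s2 -> s1 = s2.
Proof.
move=> sorted1 sorted2 eq_w; apply: val_inj; apply: (inj_map val_inj).
apply: (sorted_eq leq_trans anti_leq sorted1 sorted2); apply: perm_map.
by apply/allP => k _ /=; rewrite -!card_Cset_tuple_word eq_w.
Qed.

Lemma tuple_word_onto w : Omega w -> starts_bullet1 w ->
  (forall (k : 'I_n.+1) j, j \in Cset w k -> (w j).2 = k) ->
  exists2 s : (L - n.+1).-tuple 'I_n.+1, sorted leq (map val s) & w = tuple_word s.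
Proof.
case/andP=> w_once w_cyclic w_start Cset_label.
have B_incr := bullet_pos_increasing w_once w_start w_cyclic.
have lt_BnL := bullet_pos_lt w_once n.
pose ss := blocks (fun k => next_bullet L n (bullet_pos w) k - (bullet_pos w k).+1) n.+1.
have size_ss : size (map (@inord n) ss) == L - n.+1.
  by rewrite size_map size_blocks_gaps ?bullet_pos0.
have vals_ss : map val (Tuple size_ss) = ss.
  rewrite /= -map_comp; apply: map_id_in => x /(allP (blocks_lt _ _)) lt_xn.
  exact: inordK.
exists (Tuple size_ss); first by rewrite vals_ss sorted_blocks.
rewrite (word_of_bullet_pos w_once w_start w_cyclic Cset_label) /tuple_word vals_ss.
by apply: eq_word_of_bullets => k le_kn; rewrite bullets_of_blocks_gaps ?bullet_pos0.
Qed.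

End TupleWord.

Local Open Scope ring_scope.

Lemma prod_seq_count (R : comPzSemiRingType) (I : finType) (s : seq I) (f : I -> R) :
  \prod_(i <- s) f i = \prod_i f i ^+ count_mem i s.
Proof.
elim: s => [|x s IHs]; first by rewrite big_nil big1 // => i _; rewrite expr0.
rewrite big_cons IHs /=; under [RHS]eq_bigr => i _ do rewrite exprD.
rewrite big_split /=; congr (_ * _).
rewrite (bigD1 x) //= eqxx expr1 big1 ?mulr1 // => i.
by rewrite eq_sym => /negbTE ->.
Qed.

Section Weights.
Variables (R : comNzRingType) (n : nat) (p q : 'I_n -> R).

Lemma wbox_diag k : wbox p q k k = \prod_(j < n | j != k) p j.
Proof.
by apply: eq_bigr => j _; rewrite leqnn (_ : (k < j <= k)%N = false) //; lia.
Qed.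

Hypothesis q0 : forall i, q i = 0.

Lemma wbox_offdiag i k : i != k -> wbox p q i k = 0.
Proof.
move=> neq_ik; rewrite /wbox (bigD1 k) 1?eq_sym //= q0 leqnn /=.
case: (leqP i k) => [le_ik | _]; last by rewrite mul0r.
have lt_ik : (i < k)%N.
  by rewrite ltn_neqAle le_ik andbT; apply: contra neq_ik => /eqP/val_inj ->.
by rewrite lt_ik mul0r.
Qed.

Lemma wt_neq0_Cset L (w : word L n) k j : wt p q w != 0 -> j \in Cset w k -> (w j).2 = k.
Proof.
move=> wt_neq0 j_in_C; apply/eqP; apply: contraNT wt_neq0 => neq_label.
by rewrite /wt (bigD1 k) //= (bigD1 j) //= wbox_offdiag // !mul0r.
Qed.

End Weights.

Lemma wbox_diag_field (F : fieldType) n (p q : 'I_n -> F) k :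
  p k != 0 -> wbox p q k k = (\prod_i p i) / p k.
Proof. by move=> pk_neq0; rewrite wbox_diag [in RHS](bigD1 k) //= mulrAC mulfV ?mul1r. Qed.

Lemma wt_tuple_word (R : comNzRingType) L n (p q : 'I_n.+1 -> R)
    (s : (L - n.+1).-tuple 'I_n.+1) : (n < L)%N ->
  wt p q (tuple_word s) = \prod_(k < n.+1) wbox p q k k ^+ count_mem k s.
Proof.
move=> lt_nL; apply: eq_bigr => k _; rewrite -card_Cset_tuple_word // -prodr_const.
by apply: eq_bigr => j /label_Cset_tuple_word ->.
Qed.

Lemma wt_tuple_word_field (F : fieldType) L n (p q : 'I_n.+1 -> F)
    (s : (L - n.+1).-tuple 'I_n.+1) : (n < L)%N -> (forall i, p i != 0) ->
  wt p q (tuple_word s) = (\prod_i p i) ^+ (L - n.+1) * \prod_(i <- s) (p i)^-1.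
Proof.
move=> lt_nL p_neq0; rewrite wt_tuple_word // -prod_seq_count.
under eq_bigr => i _ do rewrite wbox_diag_field //.
by rewrite big_split /= big_const_seq count_predT iter_mulr_1 size_tuple.
Qed.

Unset Implicit Arguments.

Theorem proposition5p8 (F : fieldType) (L n : nat) :
  (1 <= n <= L)%N ->
  forall p q : 'I_n -> F,
  (forall i, q i = 0) ->
  (forall i, p i != 0) ->
  Zpart L p q =
  (\prod_(i < n) p i) ^+ (L - n) * hcompl (L - n) (fun i => (p i)^-1).
Proof.
move=> /andP[n_gt0 le_nL] p q q0 p_neq0.
case: n n_gt0 le_nL p q q0 p_neq0 => [// | n] _ lt_nL p q q0 p_neq0.
pose A := [set s : (L - n.+1).-tuple 'I_n.+1 | sorted leq (map val s)].
rewrite /hcompl mulr_sumr; under eq_bigr => s _ do rewrite -(wt_tuple_word_field q) //.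
rewrite (eq_bigl (fun s => s \in A)); last by move=> s; rewrite inE.
rewrite -big_imset /=; last by move=> s1 s2; rewrite !inE; apply: tuple_word_inj.
rewrite /Zpart (bigID (mem (@tuple_word L n @: A))) /= [X in _ + X]big1 ?addr0.
  by apply: eq_bigl => w; apply: andb_idl => /imsetP[s _ ->]; apply: tuple_word_valid.
move=> w /andP[/andP[w_Omega w_start] w_notin]; apply/eqP; apply: contraNT w_notin.
move=> /(wt_neq0_Cset q0) Cset_label.
have [s sorted_s ->] := tuple_word_onto w_Omega w_start Cset_label.
by apply: imset_f; rewrite inE.
Qed.
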